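(* Let $\mathbb Q$ be the rationals and $D$ an uncountable set disjoint from $\mathbb Q$. Let $X=\mathbb Q\cup D$ with the topology in which every point of $D$ is isolated and a neighborhood base at $q\in\mathbb Q$ consists of the sets $I\cup (D\setminus C)$, where $I\subseteq\mathbb Q$ is a Euclidean open neighborhood of $q$ in $\mathbb Q$ and $C\subseteq D$ is countable. Then $X$ is a $T_1$-space, the strong Choquet game $Ch(X)$ is $\alpha$-favorable (indeed $\alpha$ has a winning strategy depending only on $\beta$'s last move), and $X$ has no rich family of Baire spaces; in fact, every separable subspace $S$ of $X$ with $\mathbb Q\subseteq S$ is not a Baire space.
   Context: A topological space is a Baire space if every countable intersection of dense open subsets is dense. The strong Choquet game $Ch(X)$: players $\beta$ and $\alpha$ alternate, $\beta$ first; at round $n$, $\beta$ chooses a point $x_n$ and an open set $V_n\ni x_n$ (with $V_n\subseteq U_{n-1}$ if $n\ge1$), then $\alpha$ chooses an open $U_n$ with $x_n\in U_n\subseteq V_n$; $\alpha$ wins if $\bigcap_n U_n\neq\emptyset$. $Ch(X)$ is $\alpha$-favorable if $\alpha$ has a winning strategy. A rich family of Baire spaces for $X$ is a family $\mathcal F$ of nonempty separable closed Baire subspaces of $X$ such that every separable subset of $X$ is contained in some $F\in\mathcal F$, and $\overline{\bigcup_{n<\omega}F_n}\in\mathcal F$ whenever $\{F_n:n<\omega\}\subseteq\mathcal F$. *)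

From HB Require Import structures.
From mathcomp Require Import all_boot all_order all_algebra.
From Stdlib Require Import List.
Set Implicit Arguments. Unset Strict Implicit. Unset Printing Implicit Defensive.
Import Order.TTheory GRing.Theory Num.Theory.

Section Topology.
Variable T : Type.
Variable op : (T -> Prop) -> Prop.   (* the open sets *)

Definition countable (A : T -> Prop) : Prop :=
  exists f : T -> nat, forall x y, A x -> A y -> f x = f y -> x = y.

Definition T1_space : Prop :=
  forall x y : T, x <> y -> exists U, op U /\ U x /\ ~ U y.

Definition closed (A : T -> Prop) : Prop := op (fun x => ~ A x).

Definition closure (A : T -> Prop) : T -> Prop :=
  fun x => forall U, op U -> U x -> exists y, A y /\ U y.

Definition rel_open (S V : T -> Prop) : Prop :=
  (forall x, V x -> S x) /\ exists U, op U /\ forall x, V x <-> (U x /\ S x).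

Definition dense_in (S A : T -> Prop) : Prop :=
  forall U, op U -> (exists x, S x /\ U x) -> exists y, S y /\ A y /\ U y.

Definition separable (S : T -> Prop) : Prop :=
  exists A, (forall x, A x -> S x) /\ countable A /\ dense_in S A.

Definition baire_sub (S : T -> Prop) : Prop :=
  forall G : nat -> T -> Prop,
    (forall n, rel_open S (G n) /\ dense_in S (G n)) ->
    dense_in S (fun x => S x /\ forall n, G n x).

Definition rich_family (F : (T -> Prop) -> Prop) : Prop :=
  (forall A, F A -> (exists x, A x) /\ separable A /\ closed A /\ baire_sub A) /\
  (forall S, separable S -> exists A, F A /\ forall x, S x -> A x) /\
  (forall Fs : nat -> T -> Prop, (forall n, F (Fs n)) ->
     F (closure (fun x => exists n, Fs n x))).

(* ---------- The strong Choquet game Ch(T) ----------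
   A move of beta is a pair (x_n, V_n).  A strategy for alpha maps the finite
   history of beta's moves [(x_0,V_0); ...; (x_n,V_n)] (alpha's own earlier
   moves are determined by the strategy) to alpha's answer U_n. *)
Definition strategy := list (T * (T -> Prop)) -> (T -> Prop).

Definition hist (b : nat -> T * (T -> Prop)) (n : nat) : list (T * (T -> Prop)) :=
  map b (seq 0 (S n)).

Definition legal_upto (sigma : strategy) (b : nat -> T * (T -> Prop)) (n : nat) : Prop :=
  forall k, k <= n ->
    op (snd (b k)) /\ snd (b k) (fst (b k)) /\
    (forall k', k = S k' -> forall y, snd (b k) y -> sigma (hist b k') y).

Definition winning (sigma : strategy) : Prop :=
  (forall b n, legal_upto sigma b n ->
     op (sigma (hist b n)) /\ sigma (hist b n) (fst (b n)) /\
     (forall y, sigma (hist b n) y -> snd (b n) y)) /\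
  (forall b, (forall n, legal_upto sigma b n) ->
     exists x, forall n, sigma (hist b n) x).

Definition alpha_favorable : Prop := exists sigma, winning sigma.

Definition from_last (f : T -> (T -> Prop) -> (T -> Prop)) : strategy :=
  fun h => match rev h with
           | nil => fun _ => False
           | (x, V) :: _ => f x V
           end.
End Topology.

Local Open Scope ring_scope.

Definition rat_open (I : rat -> Prop) : Prop :=
  forall x, I x -> exists e : rat, 0 < e /\ forall y, `|y - x| < e -> I y.

Definition uncountable (D : Type) : Prop := ~ countable (fun _ : D => True).

(* X = rat + D (disjoint union); points of D isolated; basic neighbourhoods of q
   are I ∪ (D \ C) with I Euclidean-open nbhd of q in Q and C ⊆ D countable. *)
Definition openX (D : Type) (U : (rat + D)%type -> Prop) : Prop :=
  forall q, U (inl q) ->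
    exists (I : rat -> Prop) (C : D -> Prop),
      rat_open I /\ I q /\ countable C /\
      (forall r, I r -> U (inl r)) /\ (forall d, ~ C d -> U (inr d)).

From Pilot Require Import Defs.
From mathcomp Require Import all_boot all_order all_algebra.
From Stdlib Require Import Classical ClassicalEpsilon.
Import Order.TTheory GRing.Theory Num.Theory.

Set Implicit Arguments.
Unset Strict Implicit.
Unset Printing Implicit Defensive.

(* Against a play of the strong Choquet game, alpha answers beta's open set
   unchanged when beta's point is rational and the singleton {d} when it is
   a point d of D.  If beta ever plays some d, the play is frozen at d; if he
   always plays rationals, each of his open sets omits only countably many
   points of D, and an uncountable D has a point omitted by none of them.

   A separable subspace S containing Q meets D in a countable set, since the
   points of D are isolated and hence lie in every dense subset of S.  Removing
   the (non-isolated, closed) rationals one at a time gives countably many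
   dense open subsets of S whose intersection S \ Q is not dense: it misses the
   open set Q u (D \ S), which is co-countable in D. *)

Section Countable.
Variable T : Type.

Lemma countable0 : countable (fun _ : T => False).
Proof. by exists (fun _ => 0%N). Qed.

Lemma countable1 (a : T) : countable (fun x => x = a).
Proof. by exists (fun _ => 0%N) => x y -> ->. Qed.

Lemma countable_sub (A B : T -> Prop) :
  countable A -> (forall x, B x -> A x) -> countable B.
Proof. by move=> [f f_inj] BA; exists f => x y /BA Ax /BA Ay; apply: f_inj. Qed.

Lemma countable_bigcup (C : nat -> T -> Prop) :
  (forall n, countable (C n)) -> countable (fun x => exists n, C n x).
Proof.
move=> Ccount.
have [f f_inj] := choice
  (fun n (f : T -> nat) => forall x y, C n x -> C n y -> f x = f y -> x = y) Ccount.
have [N CN] : exists N : T -> nat, forall x, (exists n, C n x) -> C (N x) x.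
  apply: (choice (fun x n => (exists n, C n x) -> C n x)) => x.
  case: (classic (exists n, C n x)) => [[n Cnx] | noC]; first by exists n.
  by exists 0%N => /noC.
exists (fun x => pickle (N x, f (N x) x)) => x y Cx Cy /(pcan_inj (@pickleK_inv _)).
case=> ENxy Efxy; apply: (f_inj (N x)); [exact: CN | rewrite ENxy; exact: CN |].
by rewrite Efxy ENxy.
Qed.

Lemma uncountable_avoid (C : nat -> T -> Prop) :
  uncountable T -> (forall n, countable (C n)) -> exists x, forall n, ~ C n x.
Proof.
move=> Tunc Ccount; apply: NNPP => no_avoid; apply: Tunc.
apply: (countable_sub (countable_bigcup Ccount)) => x _.
apply: NNPP => notC; apply: no_avoid; exists x => n Cnx.
by apply: notC; exists n.
Qed.

End Countable.

Section GeneralTopology.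
Variables (T : Type) (op : (T -> Prop) -> Prop).

Lemma from_last_hist (f : T -> (T -> Prop) -> T -> Prop) b n :
  from_last f (hist b n) = f (b n).1 (b n).2.
Proof.
rewrite /from_last /hist List.seq_S List.map_app List.rev_app_distr /=.
by case: (b n).
Qed.

Lemma dense_in_isolated (S A : T -> Prop) x :
  dense_in op S A -> op (fun z => z = x) -> S x -> A x.
Proof.
move=> Adense x_open Sx.
by have [y [_ [Ay <-]]] := Adense _ x_open (ex_intro _ x (conj Sx erefl)).
Qed.

Lemma points_closed_T1 :
  (forall x, Defs.closed op (fun z => z = x)) -> T1_space op.
Proof.
move=> points_closed x y xy; exists (fun z => z <> y).
by split; [exact: points_closed | split=> // /(_ erefl)].
Qed.

Lemma not_baire_sub (S : T -> Prop) (e : nat -> T) :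
  (forall x, Defs.closed op (fun z => z = x)) ->
  (forall n, S (e n)) ->
  (forall n U, op U -> U (e n) -> exists y, S y /\ U y /\ y <> e n) ->
  ~ dense_in op S (fun x => S x /\ forall n, x <> e n) ->
  ~ baire_sub op S.
Proof.
move=> points_closed Se e_nonisolated not_dense Sbaire; apply: not_dense.
pose G n x := S x /\ x <> e n.
have G_open n : rel_open op S (G n).
  split; first by move=> x [].
  by exists (fun x => x <> e n); split; [exact: points_closed | move=> x; split=> -[]].
have G_dense n : dense_in op S (G n).
  move=> U Uopen [x [Sx Ux]]; case: (classic (x = e n)) => [xe | nxe]; last by exists x.
  rewrite xe in Ux; have [y [Sy [Uy nye]]] := e_nonisolated n U Uopen Ux.
  by exists y.
move=> U Uopen SU.
have [y [Sy [[_ Gy] Uy]]] := Sbaire G (fun n => conj (G_open n) (G_dense n)) U Uopen SU.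
exists y; split=> //; split=> //; split=> // n.
by case: (Gy n).
Qed.

Lemma rich_family_baire_superset (F : (T -> Prop) -> Prop) (S : T -> Prop) :
  rich_family op F -> separable op S ->
  exists A, separable op A /\ baire_sub op A /\ forall x, S x -> A x.
Proof.
move=> [Fgood [Fcover _]] Ssep; have [A [FA SA]] := Fcover S Ssep.
by have [_ [Asep [_ Abaire]]] := Fgood A FA; exists A.
Qed.

End GeneralTopology.

Section SpaceX.
Variable D : Type.
Local Notation X := (rat + D)%type.
Local Notation openX := (@openX D).

Lemma rat_open_setT : rat_open (fun _ => True).
Proof. by move=> x _; exists 1%R. Qed.

Lemma rat_open_neq (r : rat) : rat_open (fun s => s <> r).
Proof.
move=> x xr; exists `|x - r|%R; split; first by rewrite normr_gt0 subr_eq0; apply/eqP.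
by move=> y + yr; rewrite yr distrC ltxx.
Qed.

Lemma openX_points_closed (x : X) : Defs.closed openX (fun z => z = x).
Proof.
move=> q xq; case: x xq => [r | d] xq.
- exists (fun s => s <> r), (fun _ => False); do !split.
  + exact: rat_open_neq.
  + by move=> qr; apply: xq; rewrite qr.
  + exact: countable0.
  + by move=> s sr [].
  + by [].
- exists (fun _ => True), (fun e => e = d); do !split.
  + exact: rat_open_setT.
  + exact: countable1.
  + by [].
  + by move=> e ed [].
Qed.

Lemma openX_isolated (d : D) : openX (fun z => z = inr d).
Proof. by []. Qed.

Lemma openX_cocountable (U : X -> Prop) q :
  openX U -> U (inl q) -> countable (fun d => ~ U (inr d)).
Proof.
move=> Uopen Uq; have [I [C [_ [_ [Ccount [_ UC]]]]]] := Uopen q Uq.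
by apply: (countable_sub Ccount) => d nUd; apply: NNPP => nCd; apply/nUd/UC.
Qed.

Lemma openX_rat_nonisolated (U : X -> Prop) q :
  openX U -> U (inl q) -> exists r, r <> q /\ U (inl r).
Proof.
move=> Uopen Uq; have [I [C [Iopen [Iq [_ [IU _]]]]]] := Uopen q Uq.
have [e [e_gt0 Ie]] := Iopen q Iq.
have q_lt_qe : (q < q + e)%R by rewrite ltrDl.
have [q_lt_r r_lt_qe] := midf_lt q_lt_qe.
exists ((q + (q + e)) / 2%:R)%R; split; first by move=> rq; rewrite rq ltxx in q_lt_r.
apply/IU/Ie; rewrite gtr0_norm ?subr_gt0 //.
by rewrite ltrBlDl.
Qed.

Definition rat_part (z : X) : Prop := exists q, z = inl q.

Lemma rat_part_separable : separable openX rat_part.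
Proof.
exists rat_part; split=> //; split; last by move=> U _ [x [Qx Ux]]; exists x.
exists (fun z => if z is inl q then pickle q else 0%N).
by move=> _ _ [a ->] [b ->] /= /(pcan_inj (@pickleK_inv _)) ->.
Qed.

Lemma separable_countable_D (S : X -> Prop) :
  separable openX S -> countable (fun d => S (inr d)).
Proof.
move=> [A [_ [[f f_inj] Adense]]].
have AD : countable (fun d => A (inr d)).
  by exists (fun d => f (inr d)) => a b Aa Ab /(f_inj _ _ Aa Ab) [].
by apply: (countable_sub AD) => d; apply: dense_in_isolated Adense _.
Qed.

Lemma openX_not_baire (S : X -> Prop) :
  separable openX S -> (forall q, S (inl q)) -> ~ baire_sub openX S.
Proof.
move=> Ssep SQ.
apply: (not_baire_sub (e := fun n => inl (odflt 0%R (pickle_inv n)))).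
- exact: openX_points_closed.
- by move=> n; apply: SQ.
- move=> n U Uopen Uq; have [r [rq Ur]] := openX_rat_nonisolated Uopen Uq.
  by exists (inl r); do !split => //; case.
pose U (z : X) := if z is inr d then ~ S (inr d) else True.
have Uopen : openX U.
  move=> q _; exists (fun _ => True), (fun d => S (inr d)); do !split => //.
  - exact: rat_open_setT.
  - exact: separable_countable_D.
move=> SQ_dense; have [[q | d] [Sy [[_ notQ] Uy]]] :=
  SQ_dense U Uopen (ex_intro _ (inl 0%R) (conj (SQ 0%R) I)).
- by apply: (notQ (pickle q)); rewrite pickleK_inv.
- exact: Uy.
Qed.

Definition isolating_strategy (x : X) (V : X -> Prop) : X -> Prop :=
  if x is inr d then fun z => z = inr d else V.

Lemma isolating_strategy_legal (x : X) (V : X -> Prop) :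
  openX V -> V x ->
  openX (isolating_strategy x V) /\ isolating_strategy x V x /\
  (forall y, isolating_strategy x V y -> V y).
Proof.
case: x => [q | d] /= Vopen Vx; first by do !split.
by split; [exact: openX_isolated | split=> // y ->].
Qed.

Section Play.
Variable b : nat -> X * (X -> Prop).
Hypothesis b_legal : forall n, legal_upto openX (from_last isolating_strategy) b n.

Let answer n := isolating_strategy (b n).1 (b n).2.

Lemma answer_legal n : answer n (b n).1 /\ (forall y, answer n y -> (b n).2 y).
Proof.
have [Vopen [Vx _]] := b_legal (leqnn n).
exact: (isolating_strategy_legal Vopen Vx).2.
Qed.

Lemma answer_nested k m : (k <= m)%N -> forall y, answer m y -> answer k y.
Proof.
elim: m => [|m IH]; first by rewrite leqn0 => /eqP ->.
rewrite leq_eqVlt ltnS => /orP [/eqP -> // | km] y ans_y; apply: IH => //.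
have [_ [_ V_sub]] := b_legal (leqnn m.+1).
rewrite /answer -from_last_hist; apply: (V_sub m erefl).
exact: (answer_legal m.+1).2.
Qed.

Lemma play_frozen n d : (b n).1 = inr d -> forall m, answer m (inr d).
Proof.
move=> bnd m; case: (leqP m n) => [mn | nm].
  by apply: answer_nested mn _ _; rewrite -bnd; apply: (answer_legal n).1.
have bmd : (b m).1 = inr d.
  have := answer_nested (ltnW nm) (answer_legal m).1.
  by rewrite /answer /isolating_strategy bnd.
by rewrite -bmd; apply: (answer_legal m).1.
Qed.

Lemma play_rational : uncountable D -> (forall n, exists q, (b n).1 = inl q) ->
  exists d, forall n, answer n (inr d).
Proof.
move=> Dunc Q_moves.
have answerV n : answer n = (b n).2 by rewrite /answer; case: (Q_moves n) => q ->.
have V_cocountable n : countable (fun d => ~ (b n).2 (inr d)).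
  case: (Q_moves n) => q bq; have [Vopen [Vx _]] := b_legal (leqnn n).
  by rewrite bq in Vx; apply: openX_cocountable Vopen Vx.
have [d Vd] := uncountable_avoid Dunc V_cocountable.
by exists d => n; rewrite answerV; apply: NNPP; apply: Vd.
Qed.

End Play.

Lemma isolating_strategy_winning :
  uncountable D -> winning openX (from_last isolating_strategy).
Proof.
move=> Dunc; split=> [b n b_legal | b b_legal].
  have [Vopen [Vx _]] := b_legal n (leqnn n).
  by rewrite from_last_hist; apply: isolating_strategy_legal.
suff [x ans_x] : exists x, forall n, isolating_strategy (b n).1 (b n).2 x.
  by exists x => n; rewrite from_last_hist.
case: (classic (exists n d, (b n).1 = inr d)) => [[n [d bnd]] | no_D].
  by exists (inr d); apply: play_frozen bnd.
have [|d Vd] := play_rational b_legal Dunc; last by exists (inr d).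
move=> n; case E: (b n).1 => [q | d]; first by exists q.
by case: no_D; exists n, d.
Qed.

End SpaceX.

Theorem mainTheorem7 (D : Type) (hD : uncountable D) :
  T1_space (@openX D) /\
  alpha_favorable (@openX D) /\
  (exists f, winning (@openX D) (from_last f)) /\
  ~ (exists F, rich_family (@openX D) F) /\
  (forall S : (rat + D)%type -> Prop,
      separable (@openX D) S -> (forall q : rat, S (inl q)) ->
      ~ baire_sub (@openX D) S).
Proof.
have win := isolating_strategy_winning hD.
split; first exact/points_closed_T1/openX_points_closed.
split; first by exists (from_last (@isolating_strategy D)).
split; first by exists (@isolating_strategy D).
split; last exact: openX_not_baire.
move=> [F Frich].
have [A [Asep [Abaire QA]]] := rich_family_baire_superset Frich (rat_part_separable D).
by apply: (openX_not_baire Asep) Abaire => q; apply: QA; exists q.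
Qed.
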